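(* Let $m\ge 1$ and for $i\in\{1,\dots,m\}$ let $f_i:\mathbb{R}^n\to\mathbb{R}\cup\{\infty\}$ be proper, lower semicontinuous, prox-bounded functions with respective thresholds of prox-boundedness $\bar r_i$. Let $r>\max_i\{\bar r_i\}$. Let $\delta:\Lambda\to\mathbb{R}$ be a continuous function with $\delta(e_i)=0$ for each canonical unit vector $e_i$ and $\delta(\lambda)>0$ for all other $\lambda\in\Lambda$, and define $$PA_r(x,\lambda):=-e_{r+\delta(\lambda)}\Big(-\sum_{i=1}^m\lambda_i e_rf_i\Big)(x).$$ Then for every $\lambda\in\Lambda$, $PA_r(\cdot,\lambda)$ is a proper function of $x$. Furthermore, if $\lambda\in\Lambda$ satisfies $\lambda_i\neq 1$ for all $i$, then $PA_r(\cdot,\lambda)$ is a lower-$\mathcal{C}^2$ function of $x$. Finally, if for some $i$ the function $f_i+\frac{r}{2}q$ is convex, then $PA_r(\cdot,e_i)=f_i$.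
   Context: $q(x)=|x|^2$. $\Lambda=\{\lambda\in\mathbb{R}^m:\lambda_i\ge 0\ \forall i,\ \sum_i\lambda_i=1\}$, and $e_i$ is the canonical unit vector with $i$-th component $1$. The Moreau envelope of $f$ with prox-parameter $r$ is $e_rf(x)=\inf_y\{f(y)+\frac r2|y-x|^2\}$. A proper function $f$ is prox-bounded if there exist $r>0$ and $\bar x$ with $e_rf(\bar x)>-\infty$; the infimum of all such $r$ is the threshold of prox-boundedness. A function is lower-$\mathcal{C}^2$ (on $\mathbb{R}^n$) if it is finite-valued and at every point $x$ the function plus some quadratic term is convex on an open convex neighborhood of $x$. *)

(* R^n is modelled as 'rV[R]_n,
   with its canonical (product = Euclidean) topology from MathComp-Analysis;
   extended-real valued functions take values in \bar R. *)
From HB Require Import structures.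
From mathcomp Require Import all_boot all_order all_algebra.
From mathcomp Require Import all_classical all_reals all_analysis.
Set Implicit Arguments. Unset Strict Implicit. Unset Printing Implicit Defensive.
Import Order.TTheory GRing.Theory Num.Theory.
Import numFieldNormedType.Exports.
Local Open Scope classical_set_scope.
Local Open Scope ring_scope.

Section defs.
Variables (R : realType).

Definition sqnorm (n : nat) (x : 'rV[R]_n) : R := \sum_(i < n) (x 0 i) ^+ 2.

Definition proper_fun (n : nat) (f : 'rV[R]_n -> \bar R) : Prop :=
  (forall x, (-oo < f x)%E) /\ (exists x, (f x < +oo)%E).

Definition moreau_env (n : nat) (f : 'rV[R]_n -> \bar R) (r : R)
  (x : 'rV[R]_n) : \bar R :=
  ereal_inf [set (f y + (r / 2 * sqnorm (y - x))%:E)%E | y in [set: 'rV[R]_n]].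

Definition prox_bounded (n : nat) (f : 'rV[R]_n -> \bar R) : Prop :=
  exists r : R, 0 < r /\ exists xb, (-oo < moreau_env f r xb)%E.

Definition prox_threshold (n : nat) (f : 'rV[R]_n -> \bar R) : \bar R :=
  ereal_inf [set r%:E | r in [set r : R | 0 < r /\
                                exists xb, (-oo < moreau_env f r xb)%E]].

Definition simplex (m : nat) : set 'rV[R]_m :=
  [set l | (forall i, 0 <= l 0 i) /\ \sum_(i < m) l 0 i = 1].

Definition unitv (m : nat) (i : 'I_m) : 'rV[R]_m := delta_mx 0 i.

Definition convex_efun (n : nat) (g : 'rV[R]_n -> \bar R) : Prop :=
  forall (x y : 'rV[R]_n) (t : R), 0 <= t <= 1 ->
    (g (t *: x + (1 - t) *: y)%R <= t%:E * g x + (1 - t)%:E * g y)%E.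

Definition convex_set_Rn (n : nat) (U : set 'rV[R]_n) : Prop :=
  forall x y (t : R), U x -> U y -> 0 <= t <= 1 -> U (t *: x + (1 - t) *: y).

Definition convex_on (n : nat) (U : set 'rV[R]_n) (g : 'rV[R]_n -> R) : Prop :=
  forall x y (t : R), U x -> U y -> 0 <= t <= 1 ->
    g (t *: x + (1 - t) *: y) <= t * g x + (1 - t) * g y.

Definition lower_C2 (n : nat) (f : 'rV[R]_n -> \bar R) : Prop :=
  (forall x, f x \is a fin_num) /\
  forall x, exists (U : set 'rV[R]_n) (rho : R),
    [/\ open U, U x, convex_set_Rn U &
        convex_on U (fun y => fine (f y) + rho / 2 * sqnorm y)].

Definition PA (n m : nat) (f : 'I_m -> 'rV[R]_n -> \bar R)
  (delta : 'rV[R]_m -> R) (r : R) (l : 'rV[R]_m) (x : 'rV[R]_n) : \bar R :=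
  (- moreau_env (fun y => - \sum_(i < m) (l 0 i)%:E * moreau_env (f i) r y)
                (r + delta l) x)%E.

End defs.

(* Put Phi = sum_i l_i e_r f_i and s = r + delta(l).  Then PA_r(., l) = -e_s(-Phi) is
   x |-> sup_y Phi(y) - s/2 |y - x|^2.  As r exceeds every threshold, each e_r f_i is
   finite, and e_r f_i(y) <= f_i(z_i) + r/2 |z_i - y|^2 bounds Phi above by a quadratic
   of curvature r.  Since s >= r the supremum is finite at one point, and everywhere
   when s > r, i.e. away from the vertices of the simplex.  Moreover
   PA + s/2 q = sup_y (Phi(y) - s/2 |y|^2 + s <y, .>) is a supremum of affine functions,
   hence convex on the whole space, which is the lower-C^2 property.
   At a vertex e_i, PA = -e_r(-e_r f_i), and this is f_i because the convex lsc function
   f_i + r/2 q is the supremum of its affine minorants: a minorant passing above a point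
   b < f_i(x) + r/2 q(x) is obtained from a minimiser p of f_i + r/2 q + mu/2 |. - x|^2,
   with mu so large that this function stays above b, via the variational inequality
   at p. *)

From HB Require Import structures.
From mathcomp Require Import all_boot all_order all_algebra.
From mathcomp Require Import all_classical all_reals all_analysis.
From mathcomp Require Import ring lra.
Set Implicit Arguments. Unset Strict Implicit. Unset Printing Implicit Defensive.
Import Order.TTheory GRing.Theory Num.Theory.
Import numFieldNormedType.Exports.
Local Open Scope classical_set_scope.
Local Open Scope ring_scope.

Section sqnorm.
Context {R : realType} {n : nat}.
Implicit Types (u v x y z p : 'rV[R]_n) (a b t : R).

Definition dotv u v : R := \sum_(i < n) u 0 i * v 0 i.

Lemma sqnorm_ge0 x : 0 <= sqnorm x.
Proof. by apply: sumr_ge0 => i _; exact: sqr_ge0. Qed.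

Lemma sqr_coord_le_sqnorm x i : x 0 i ^+ 2 <= sqnorm x.
Proof.
rewrite /sqnorm (bigD1 i) //= lerDl.
by apply: sumr_ge0 => j _; exact: sqr_ge0.
Qed.

Lemma sqnormBC x y : sqnorm (x - y) = sqnorm (y - x).
Proof. by apply: eq_bigr => i _; rewrite !mxE; ring. Qed.

Lemma dotvZl a u v : dotv (a *: u) v = a * dotv u v.
Proof. by rewrite /dotv mulr_sumr; apply: eq_bigr => i _; rewrite !mxE mulrA. Qed.

Lemma dotvB_shift p x z :
  - dotv (p - x) (z - p) = dotv (x - p) (z - x) + sqnorm (x - p).
Proof.
rewrite /dotv /sqnorm -sumrN -big_split /=.
by apply: eq_bigr => i _; rewrite !mxE; ring.
Qed.

Lemma sqnormB_segment t z p x :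
  sqnorm (t *: z + (1 - t) *: p - x) =
  sqnorm (p - x) + 2 * t * dotv (p - x) (z - p) + t ^+ 2 * sqnorm (z - p).
Proof.
rewrite /sqnorm /dotv !mulr_sumr -!big_split /=.
by apply: eq_bigr => i _; rewrite !mxE; ring.
Qed.

Lemma sqnormB_sub_sqnorm y x z :
  sqnorm (z - y) - sqnorm (y - x) = sqnorm z - sqnorm x - 2 * dotv y (z - x).
Proof.
rewrite /sqnorm /dotv mulr_sumr -!sumrB.
by apply: eq_bigr => i _; rewrite !mxE; ring.
Qed.

Lemma sqnormB_sub_sqnorm_affine t y x1 x2 :
  sqnorm (y - (t *: x1 + (1 - t) *: x2)) - sqnorm (t *: x1 + (1 - t) *: x2) =
  t * (sqnorm (y - x1) - sqnorm x1) + (1 - t) * (sqnorm (y - x2) - sqnorm x2).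
Proof.
rewrite /sqnorm -!sumrB !mulr_sumr -big_split /=.
by apply: eq_bigr => i _; rewrite !mxE; ring.
Qed.

Lemma weighted_sqnormB_le a b y u v : 0 < a < b ->
  a * sqnorm (y - u) - b * sqnorm (y - v) <= a * b / (b - a) * sqnorm (u - v).
Proof.
move=> /andP[a_gt0 ab]; have ba_gt0 : 0 < b - a by rewrite subr_gt0.
rewrite /sqnorm !mulr_sumr -sumrN -big_split /=; apply: ler_sum => i _.
rewrite !mxE mulrAC ler_pdivlMr // -subr_ge0.
have := sqr_ge0 ((b - a) * y 0 i + a * u 0 i - b * v 0 i); lra.
Qed.

Lemma sqnorm_outside_ball x z e : 0 < e -> ~ ball x e z -> e ^+ 2 <= sqnorm (z - x).
Proof.
move=> e_gt0 xz; rewrite leNgt; apply/negP => lt_e; apply: xz.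
split => // i j; rewrite /ball /= ltr_norml.
have := sqr_coord_le_sqnorm (z - x) j; rewrite !mxE (ord1 i) => le_z.
have lt_zx : (z 0 j - x 0 j) ^+ 2 < e ^+ 2 by apply: le_lt_trans lt_e.
by apply/andP; split; nra.
Qed.

Lemma continuous_scaled_sqnormB a u : continuous (fun z : 'rV[R]_n => a * sqnorm (z - u)).
Proof.
move=> z; apply: (@continuousM _ _ (fun=> a) (fun z => sqnorm (z - u))).
  exact: cst_continuous.
have -> : (fun z : 'rV[R]_n => sqnorm (z - u)) =
    \sum_(i < n) (fun z : 'rV[R]_n => (z 0 i - u 0 i) * (z 0 i - u 0 i)).
  rewrite fct_sumE; apply: funext => w.
  by apply: eq_bigr => i _; rewrite !mxE expr2.
apply: (big_ind (fun g : 'rV[R]_n -> R => {for z, continuous g})).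
- exact: cst_continuous.
- by move=> g1 g2; exact: continuousD.
- move=> i _.
  have coordB : {for z, continuous (fun w : 'rV[R]_n => w 0 i - u 0 i)}.
    by apply: continuousD; [exact: coord_continuous | exact: cst_continuous].
  exact: continuousM.
Qed.

Lemma convex_comb_sqnormB m (l : 'rV[R]_m) (w : 'I_m -> 'rV[R]_n) y :
  \sum_(i < m) l 0 i = 1 ->
  \sum_(i < m) l 0 i * sqnorm (w i - y) =
  sqnorm (y - \sum_(i < m) l 0 i *: w i) + \sum_(i < m) l 0 i * sqnorm (w i)
  - sqnorm (\sum_(i < m) l 0 i *: w i).
Proof.
move=> l_sum1; rewrite /sqnorm.
under eq_bigr => i _ do rewrite mulr_sumr.
under [X in _ = _ + X - _]eq_bigr => i _ do rewrite mulr_sumr.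
rewrite exchange_big /= [X in _ = _ + X - _]exchange_big /= -big_split /= -sumrB.
apply: eq_bigr => j _; rewrite !mxE !summxE.
have -> : \sum_(k < m) (l 0 k *: w k) 0 j = \sum_(k < m) l 0 k * w k 0 j.
  by apply: eq_bigr => k _; rewrite mxE.
set c := \sum_(i < m) l 0 i * w i 0 j.
have -> : \sum_(i < m) l 0 i * (w i - y) 0 j ^+ 2 =
    \sum_(i < m) l 0 i * w i 0 j ^+ 2 - 2 * y 0 j * c + y 0 j ^+ 2 * \sum_(i < m) l 0 i.
  by rewrite /c !mulr_sumr -sumrB -big_split /=; apply: eq_bigr => i _; rewrite !mxE; ring.
by rewrite l_sum1; ring.
Qed.

End sqnorm.

Lemma ler_add_vanishing {R : realFieldType} (a b c : R) :
  0 <= c -> (forall t, 0 < t <= 1 -> a <= b + t * c) -> a <= b.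
Proof.
move=> c_ge0 le_abc; rewrite leNgt; apply/negP => ba.
have d_gt0 : 0 < a - b by rewrite subr_gt0.
have dc_gt0 : 0 < a - b + c by lra.
have t_gt0 : 0 < (a - b) / (a - b + c) by exact: divr_gt0.
have t_le1 : (a - b) / (a - b + c) <= 1 by rewrite ler_pdivrMr // mul1r; lra.
have := le_abc ((a - b) / (a - b + c)); rewrite t_gt0 t_le1 => /(_ isT).
rewrite -lerBlDl mulrAC ler_pdivlMr // => h; nra.
Qed.

Section extended_reals.
Context {R : realType}.

Lemma gtNy_cases (v : \bar R) : (-oo < v)%E -> v = +oo%E \/ exists t, v = t%:E.
Proof. by case: v => [t _ | _ |]; [right; exists t | left | rewrite ltxx]. Qed.

Lemma ereal_dense_real (a b : \bar R) : (a < b)%E -> exists c : R, (a < c%:E < b)%E.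
Proof.
case: a => [a| |]; case: b => [b| |] //=; rewrite ?ltxx //.
- move=> ab; exists ((a + b) / 2); rewrite !lte_fin in ab *; apply/andP; split; lra.
- by move=> _; exists (a + 1); rewrite lte_fin ltry andbT; lra.
- by move=> _; exists (b - 1); rewrite ltNyr lte_fin; lra.
- by move=> _; exists 0; rewrite ltNyr ltry.
Qed.

Lemma lower_semicontinuousD {T : topologicalType} (f : T -> \bar R) (c : T -> R) :
  lower_semicontinuous f -> continuous c ->
  lower_semicontinuous (fun z => (f z + (c z)%:E)%E).
Proof.
move=> f_lsc c_cont x a afx.
have [b /andP[ab bfx]] : exists b : R, ((a - c x)%:E < b%:E < f x)%E.
  by apply: ereal_dense_real; rewrite EFinB lteBlDr.
have [V Vx Vb] := f_lsc x b bfx.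
have cx_near : \forall y \near x, a - b < c y.
  by apply: (@cvgr_gt _ _ _ _ c (c x) (c_cont x)); rewrite lte_fin in ab; lra.
exists (V `&` [set y | a - b < c y]); first exact: filterI.
move=> y [/Vb fy /= cy]; apply: (@le_lt_trans _ _ (b%:E + (a - b)%:E)%E).
  by rewrite -EFinD lee_fin; lra.
by apply: lteD; rewrite // lte_fin.
Qed.

Lemma lower_semicontinuous_compact_min {T : topologicalType} (h : T -> \bar R) (A : set T) :
  lower_semicontinuous h -> compact A -> A !=set0 ->
  exists2 p, A p & forall z, A z -> (h p <= h z)%E.
Proof.
move=> h_lsc A_compact [a Aa].
set m := ereal_inf (h @` A).
have m_le z : A z -> (m <= h z)%E by move=> Az; apply: ereal_inf_lbound; exists z.
have [m_oo | m_lt] := eqVneq m +oo%E.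
  by exists a => // z /m_le; rewrite m_oo leye_eq => /eqP ->; exact: leey.
set B := fun c => A `&` [set z | (h z < c)%E].
have F_proper : ProperFilter (filter_from [set c | (m < c)%E] B).
  apply: filter_from_proper; last first.
    by move=> c /ereal_inf_lt[_ [z Az <-] hz]; exists z.
  apply: filter_from_filter; first by exists +oo%E; rewrite /= ltey.
  move=> c1 c2 mc1 mc2; exists (Order.min c1 c2); first by rewrite /= lt_min mc1.
  by move=> z [Az]; rewrite /= lt_min => /andP[hz1 hz2].
have [|p [Ap p_cluster]] := A_compact _ F_proper.
  by exists +oo%E; [rewrite /= ltey | move=> z []].
exists p => // z Az; apply: le_trans (m_le z Az); rewrite leNgt; apply/negP => mp.
have [c /andP[mc ch]] := ereal_dense_real mp.
have [V Vp Vc] := h_lsc p c ch.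
have [y [[_ hy] Vy]] : B c%:E `&` V !=set0 by apply: p_cluster => //; exists c%:E.
by have := Vc _ Vy; rewrite ltNge (ltW hy).
Qed.

End extended_reals.

Section convex_minorant.
Context {R : realType} {n : nat}.
Implicit Types (g h : 'rV[R]_n -> \bar R) (x z p : 'rV[R]_n).

Lemma coercive_lsc_min h x (L mu : R) z0 :
  lower_semicontinuous h -> 0 < mu ->
  (forall z, ((L + mu * sqnorm (z - x))%:E <= h z)%E) -> (h z0 < +oo)%E ->
  exists p, forall z, (h p <= h z)%E.
Proof.
move=> h_lsc mu_gt0 h_lb hz0.
have /fineK hz0E : h z0 \is a fin_num.
  by rewrite fin_numElt hz0 andbT (lt_le_trans (ltNyr _) (h_lb z0)).
set M := fine (h z0) in hz0E.
set A := [set z | (h z <= M%:E)%E].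
have A_closed : closed A.
  have -> : A = ~` [set z | (M%:E < h z)%E].
    by rewrite predeqE => z; rewrite /A /setC /= leNgt; split => /negP.
  by apply: open_closedC; move/lower_semicontinuousP: h_lsc; apply.
set K := (M - L) / mu.
pose seg i := `[x 0 i - (1 + K), x 0 i + (1 + K)]%classic.
set box := [set v : 'rV[R]_n | forall i, seg i (v 0 i)].
have A_box : A `<=` box.
  move=> z Az i.
  have zK : sqnorm (z - x) <= K.
    by rewrite /K ler_pdivlMr // mulrC; have := le_trans (h_lb z) Az; rewrite lee_fin; lra.
  have := le_trans (sqr_coord_le_sqnorm (z - x) i) zK; rewrite !mxE => ziK.
  have [lb ub] : - (1 + K) <= z 0 i - x 0 i /\ z 0 i - x 0 i <= 1 + K.
    by move: (z 0 i - x 0 i) ziK => d dK; split; nra.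
  by rewrite /seg /= in_itv /=; apply/andP; split; lra.
have box_compact : compact box.
  exact: (@rV_compact _ n seg (fun i => @segment_compact _ _ _)).
have A_compact : compact A := subclosed_compact A_closed box_compact A_box.
have Az0 : A z0 by rewrite /A /= hz0E.
have [p Ap p_min] := lower_semicontinuous_compact_min h_lsc A_compact (ex_intro _ z0 Az0).
exists p => z; have [/p_min // | Az] := pselect (A z).
by apply: le_trans Ap (ltW _); rewrite ltNge; exact/negP.
Qed.

Lemma lsc_quadratic_penalty g x (L b : R) :
  lower_semicontinuous g -> (forall z, (L%:E <= g z)%E) -> (b%:E < g x)%E ->
  exists2 mu, 0 < mu & forall z, (b%:E <= g z + (mu / 2 * sqnorm (z - x))%:E)%E.
Proof.
move=> g_lsc g_lb bgx.
have [V /nbhs_ballP[e /= e_gt0 eV] Vb] := g_lsc x b bgx.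
have e2_gt0 : 0 < e ^+ 2 by exact: exprn_gt0.
have bL_ge0 := normr_ge0 (b - L).
set mu := 2 * (`|b - L| + 1) / e ^+ 2.
have mu_gt0 : 0 < mu by apply: divr_gt0 => //; lra.
exists mu => // z; have [xz | xz] := pselect (ball x e z).
  apply: le_trans (ltW (Vb _ (eV _ xz))) (leeDl _ _).
  by rewrite lee_fin; apply: mulr_ge0 (sqnorm_ge0 _); lra.
have far : `|b - L| + 1 <= mu / 2 * sqnorm (z - x).
  have -> : mu / 2 * sqnorm (z - x) = (`|b - L| + 1) * (sqnorm (z - x) / e ^+ 2).
    by rewrite /mu; field; rewrite gt_eqF.
  have : 1 <= sqnorm (z - x) / e ^+ 2.
    by rewrite ler_pdivlMr // mul1r; exact: sqnorm_outside_ball.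
  nra.
have := ler_norm (b - L); have := g_lb z.
case: (g z) => [t| _ _ | //]; last by rewrite addye // leey.
by rewrite -EFinD !lee_fin => Lt; lra.
Qed.

Lemma convex_prox_variational g x p (mu Gp : R) :
  0 <= mu -> convex_efun g -> (forall z, (-oo < g z)%E) -> g p = Gp%:E ->
  (forall z, (g p + (mu / 2 * sqnorm (p - x))%:E <= g z + (mu / 2 * sqnorm (z - x))%:E)%E) ->
  forall z, ((Gp - mu * dotv (p - x) (z - p))%:E <= g z)%E.
Proof.
move=> mu_ge0 g_cvx g_gtNy gp p_min z.
have [-> | [Gz gz]] := gtNy_cases (g_gtNy z); first exact: leey.
rewrite gz lee_fin; apply: (@ler_add_vanishing _ _ _ (mu / 2 * sqnorm (z - p))).
  by apply: mulr_ge0 (sqnorm_ge0 _); lra.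
move=> t /andP[t_gt0 t_le1].
have := g_cvx z p t; rewrite (ltW t_gt0) t_le1 gz gp => /(_ isT).
have := p_min (t *: z + (1 - t) *: p); rewrite gp.
have [-> | [Gt ->]] := gtNy_cases (g_gtNy (t *: z + (1 - t) *: p)).
  by move=> _; rewrite -!EFinM -EFinD leye_eq.
rewrite -!EFinM -!EFinD !lee_fin sqnormB_segment => le_min le_cvx.
have : t * (Gp - mu * dotv (p - x) (z - p)) <= t * (Gz + t * (mu / 2 * sqnorm (z - p))).
  by lra.
by rewrite ler_pM2l.
Qed.

Lemma convex_lsc_affine_minorant g x (L b : R) z0 :
  lower_semicontinuous g -> convex_efun g -> (forall z, (L%:E <= g z)%E) ->
  (g z0 < +oo)%E -> (b%:E < g x)%E ->
  exists a, forall z, ((b + dotv a (z - x))%:E <= g z)%E.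
Proof.
move=> g_lsc g_cvx g_lb gz0 bgx.
have g_gtNy z : (-oo < g z)%E := lt_le_trans (ltNyr L) (g_lb z).
have [mu mu_gt0 b_le] := lsc_quadratic_penalty g_lsc g_lb bgx.
pose h z := (g z + (mu / 2 * sqnorm (z - x))%:E)%E.
have h_lsc : lower_semicontinuous h.
  apply: (@lower_semicontinuousD _ _ g (fun z => mu / 2 * sqnorm (z - x))) => //.
  exact: continuous_scaled_sqnormB.
have h_lb z : ((L + mu / 2 * sqnorm (z - x))%:E <= h z)%E.
  by rewrite EFinD; exact: leeD2r.
have hz0 : (h z0 < +oo)%E by rewrite lte_add_pinfty ?ltry.
have [p p_min] := coercive_lsc_min h_lsc (divr_gt0 mu_gt0 (ltr0Sn _ 1)) h_lb hz0.
have [gp_oo | [Gp gp]] := gtNy_cases (g_gtNy p).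
  by have := le_lt_trans (p_min z0) hz0; rewrite /h gp_oo addye ?ltxx.
have vi := convex_prox_variational (ltW mu_gt0) g_cvx g_gtNy gp p_min.
exists (mu *: (x - p)) => z; apply: le_trans (vi z); rewrite lee_fin dotvZl.
have := b_le p; rewrite gp -EFinD lee_fin sqnormBC => b_le_p.
have := congr1 (fun v => mu * v) (dotvB_shift p x z) => /= shift.
have := mulr_ge0 (ltW mu_gt0) (sqnorm_ge0 (x - p)); lra.
Qed.

End convex_minorant.

Section moreau_envelope.
Context {R : realType} {n : nat}.
Implicit Types (f : 'rV[R]_n -> \bar R) (phi : 'rV[R]_n -> R) (x y z : 'rV[R]_n).

Lemma moreau_env_le f r x z : (moreau_env f r x <= f z + (r / 2 * sqnorm (z - x))%:E)%E.
Proof. by apply: ereal_inf_lbound; exists z. Qed.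

Lemma moreau_env_ge f r x c :
  (forall z, (c <= f z + (r / 2 * sqnorm (z - x))%:E)%E) -> (c <= moreau_env f r x)%E.
Proof. by move=> c_le; apply: le_ereal_inf_tmp => _ [z _ <-]. Qed.

Lemma moreau_env_EFin_ltey phi r x : (moreau_env (fun y => (phi y)%:E) r x < +oo)%E.
Proof. by apply: le_lt_trans (moreau_env_le _ _ x x) _; rewrite -EFinD ltry. Qed.

Lemma prox_threshold_lt_gt0 f r : (prox_threshold f < r%:E)%E -> 0 < r.
Proof.
by move=> /ereal_inf_lt[_ [r' [r'_gt0 _] <-]]; rewrite lte_fin; exact: lt_trans.
Qed.

Lemma prox_threshold_lt_env_lb f r : (prox_threshold f < r%:E)%E ->
  exists C : 'rV[R]_n -> R,
    forall x z, ((C x)%:E <= f z + (r / 2 * sqnorm (z - x))%:E)%E.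
Proof.
move=> /ereal_inf_lt[_ [r' [r'_gt0 [xb env_gtNy]] <-]]; rewrite lte_fin => r'r.
have [c c_le] : exists c, (c%:E <= moreau_env f r' xb)%E.
  case: (moreau_env f r' xb) env_gtNy => [c _ | _ | //]; first by exists c.
  by exists 0; exact: leey.
exists (fun x => c - r' * r / (r - r') / 2 * sqnorm (xb - x)) => x z.
have f_ge : ((c - r' / 2 * sqnorm (z - xb))%:E <= f z)%E.
  by rewrite EFinB leeBlDr //; exact: le_trans c_le (moreau_env_le _ _ _ _).
apply: le_trans (leeD2r _ f_ge); rewrite -EFinD lee_fin.
have r'_r : 0 < r' < r by rewrite r'_gt0 r'r.
by have := weighted_sqnormB_le z xb x r'_r; lra.
Qed.

Lemma moreau_env_fin f r x :
  proper_fun f -> (prox_threshold f < r%:E)%E -> moreau_env f r x \is a fin_num.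
Proof.
move=> [_ [z fz]] /prox_threshold_lt_env_lb[C C_le].
rewrite fin_numElt; apply/andP; split.
  by apply: lt_le_trans (ltNyr (C x)) _; exact: moreau_env_ge.
by apply: le_lt_trans (moreau_env_le f r x z) _; rewrite lte_add_pinfty ?ltry.
Qed.

End moreau_envelope.

Section negated_envelope.
Context {R : realType} {n : nat}.
Variables (phi : 'rV[R]_n -> R) (s : R).

Lemma neg_env_neg_gtNy x : (-oo < - moreau_env (fun y => (- phi y)%:E) s x)%E.
Proof. by rewrite lteNr; exact: moreau_env_EFin_ltey. Qed.

Lemma neg_env_neg_le r C w : r <= s ->
  (forall y, phi y <= C + r / 2 * sqnorm (y - w)) ->
  (- moreau_env (fun y => (- phi y)%:E) s w <= C%:E)%E.
Proof.
move=> rs phi_le; rewrite leeNl -EFinN; apply: moreau_env_ge => y.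
rewrite -EFinD lee_fin; have := phi_le y; have := sqnorm_ge0 (y - w); nra.
Qed.

Lemma neg_env_neg_fin r C w : 0 < r < s ->
  (forall y, phi y <= C + r / 2 * sqnorm (y - w)) ->
  forall x, (- moreau_env (fun y => (- phi y)%:E) s x)%E \is a fin_num.
Proof.
move=> rs phi_le x; rewrite fin_numN fin_numElt moreau_env_EFin_ltey andbT.
apply: lt_le_trans (ltNyr (- C - r * s / (s - r) / 2 * sqnorm (w - x))) _.
apply: moreau_env_ge => y; rewrite -EFinD lee_fin.
by have := phi_le y; have := weighted_sqnormB_le y w x rs; lra.
Qed.

Lemma neg_env_neg_convex :
  (forall x, (- moreau_env (fun y => (- phi y)%:E) s x)%E \is a fin_num) ->
  convex_on setT (fun x => fine (- moreau_env (fun y => (- phi y)%:E) s x) + s / 2 * sqnorm x).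
Proof.
move=> env_fin x1 x2 t _ _ /andP[t_ge0 t_le1].
pose e x := fine (moreau_env (fun y => (- phi y)%:E) s x).
have eE x : (e x)%:E = moreau_env (fun y => (- phi y)%:E) s x.
  by rewrite fineK // -fin_numN.
have e_le x y : e x <= - phi y + s / 2 * sqnorm (y - x).
  by rewrite -lee_fin eE EFinD; exact: moreau_env_le.
have eN x : fine (- moreau_env (fun y => (- phi y)%:E) s x) = - e x := fineN _.
rewrite !eN.
set xt := t *: x1 + (1 - t) *: x2.
set c := t * (e x1 - s / 2 * sqnorm x1) + (1 - t) * (e x2 - s / 2 * sqnorm x2).
suff : c + s / 2 * sqnorm xt <= e xt by rewrite /c; lra.
rewrite -lee_fin eE; apply: moreau_env_ge => y; rewrite -EFinD lee_fin.
(* [x |-> |y - x|^2 - |x|^2] is affine, so the bound passes through convex combinations *)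
have := congr1 (fun v => s / 2 * v) (sqnormB_sub_sqnorm_affine t y x1 x2) => /= aff.
have t1_ge0 : 0 <= 1 - t by rewrite subr_ge0.
have := ler_wpM2l t_ge0 (e_le x1 y).
have := ler_wpM2l t1_ge0 (e_le x2 y).
rewrite /c; lra.
Qed.

End negated_envelope.

Section moreau_env_involution.
Context {R : realType} {n : nat}.
Variables (f : 'rV[R]_n -> \bar R) (r : R).
Hypotheses (f_proper : proper_fun f) (f_lsc : lower_semicontinuous f)
  (r_gt_thr : (prox_threshold f < r%:E)%E)
  (f_convex : convex_efun (fun x => (f x + (r / 2 * sqnorm x)%:E)%E)).

Lemma moreau_env_supporting x c : (c%:E < f x)%E ->
  exists y, ((c + r / 2 * sqnorm (y - x))%:E <= moreau_env f r y)%E.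
Proof.
move=> cfx; have r_gt0 := prox_threshold_lt_gt0 r_gt_thr.
have [C C_le] := prox_threshold_lt_env_lb r_gt_thr.
have [f_gtNy [z0 fz0]] := f_proper.
pose g z := (f z + (r / 2 * sqnorm z)%:E)%E.
have g_lsc : lower_semicontinuous g.
  apply: (@lower_semicontinuousD _ _ f (fun z => r / 2 * sqnorm z)) => // z.
  have := @continuous_scaled_sqnormB R n (r / 2) 0 z.
  by under eq_fun do rewrite subr0.
have g_lb z : ((C 0)%:E <= g z)%E by have := C_le 0 z; rewrite subr0.
have gz0 : (g z0 < +oo)%E by rewrite lte_add_pinfty ?ltry.
have gx : ((c + r / 2 * sqnorm x)%:E < g x)%E by rewrite EFinD lteD2rE.
have [a a_le] := convex_lsc_affine_minorant g_lsc f_convex g_lb gz0 gx.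
(* an affine minorant of slope [a] of [g] is a quadratic minorant of [f] centred at [a / r] *)
exists (r^-1 *: a); apply: moreau_env_ge => z.
have := a_le z; rewrite /g.
have [-> | [t ->]] := gtNy_cases (f_gtNy z); first by rewrite !addye ?leey.
rewrite -!EFinD !lee_fin.
have := congr1 (fun v => r / 2 * v) (sqnormB_sub_sqnorm (r^-1 *: a) x z) => /= expand.
have : r * dotv (r^-1 *: a) (z - x) = dotv a (z - x) by rewrite dotvZl mulVKf ?gt_eqF.
lra.
Qed.

Lemma neg_moreau_env_neg_moreau_env x :
  (- moreau_env (fun y => - moreau_env f r y) r x = f x)%E.
Proof.
have env_fin y : moreau_env f r y \is a fin_num := moreau_env_fin y f_proper r_gt_thr.
apply/le_anti/andP; split.
  have [-> | [t ft]] := gtNy_cases (f_proper.1 x); first exact: leey.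
  rewrite ft leeNl -EFinN; apply: moreau_env_ge => y.
  have := moreau_env_le f r y x; rewrite ft -(fineK (env_fin y)) -EFinN -!EFinD !lee_fin.
  by rewrite sqnormBC; lra.
rewrite leNgt; apply/negP => /ereal_dense_real[c /andP[lt_c c_lt]].
have [y y_le] := moreau_env_supporting c_lt.
move: lt_c; apply/negP; rewrite -leNgt leeNr.
apply: le_trans (moreau_env_le _ r x y) _.
rewrite -(fineK (env_fin y)) -EFinN -EFinD -EFinN lee_fin.
by rewrite -(fineK (env_fin y)) lee_fin in y_le; lra.
Qed.

End moreau_env_involution.

Section proximal_average.
Context {R : realType} {n m : nat}.
Variables (f : 'I_m -> 'rV[R]_n -> \bar R) (r : R).
Hypotheses (f_proper : forall i, proper_fun (f i))
  (r_gt_thr : forall i, (prox_threshold (f i) < r%:E)%E) (r_gt0 : 0 < r).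

Definition env_comb (l : 'rV[R]_m) (y : 'rV[R]_n) : R :=
  \sum_(i < m) l 0 i * fine (moreau_env (f i) r y).

Lemma PA_env_combE (delta : 'rV[R]_m -> R) (l : 'rV[R]_m) :
  PA f delta r l = fun x => (- moreau_env (fun y => (- env_comb l y)%:E) (r + delta l) x)%E.
Proof.
apply: funext => x; rewrite /PA; congr (- moreau_env _ _ _)%E; apply: funext => y.
rewrite EFinN /env_comb -sumEFin; congr (- _)%E; apply: eq_bigr => i _.
by rewrite EFinM fineK //; exact: moreau_env_fin.
Qed.

Lemma PA_unitv (delta : 'rV[R]_m -> R) (i : 'I_m) :
  PA f delta r (unitv R i) =
  fun x => (- moreau_env (fun y => - moreau_env (f i) r y) (r + delta (unitv R i)) x)%E.
Proof.
apply: funext => x; rewrite /PA; congr (- moreau_env _ _ _)%E; apply: funext => y.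
rewrite (bigD1 i) //= big1 ?adde0 => [|j ji]; first by rewrite /unitv mxE !eqxx mul1e.
by rewrite /unitv mxE (negbTE ji) andbF mul0e.
Qed.

Lemma env_comb_le l : simplex l ->
  exists C w, forall y, env_comb l y <= C + r / 2 * sqnorm (y - w).
Proof.
move=> [l_ge0 l_sum1].
have /choice[z fz_fin] : forall i, exists z, f i z \is a fin_num.
  move=> i; have [f_gtNy [z fz]] := f_proper i.
  by exists z; rewrite fin_numElt f_gtNy fz.
set w := \sum_(i < m) l 0 i *: z i.
exists (\sum_(i < m) l 0 i * fine (f i (z i)) +
        r / 2 * (\sum_(i < m) l 0 i * sqnorm (z i) - sqnorm w)), w => y.
have env_le i : fine (moreau_env (f i) r y) <= fine (f i (z i)) + r / 2 * sqnorm (z i - y).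
  rewrite -lee_fin EFinD !fineK //; [exact: moreau_env_le | exact: moreau_env_fin].
apply: le_trans (ler_sum _ (fun i _ => ler_wpM2l (l_ge0 i) (env_le i))) _.
under eq_bigr do rewrite mulrDr mulrCA.
by rewrite big_split /= -mulr_sumr convex_comb_sqnormB // -/w; lra.
Qed.

Lemma PA_proper (delta : 'rV[R]_m -> R) (l : 'rV[R]_m) :
  simplex l -> 0 <= delta l -> proper_fun (PA f delta r l).
Proof.
move=> l_simplex delta_ge0; have [C [w env_le]] := env_comb_le l_simplex.
rewrite PA_env_combE; split; first exact: neg_env_neg_gtNy.
exists w; apply: le_lt_trans (neg_env_neg_le _ env_le) (ltry _).
by rewrite lerDl.
Qed.

Lemma PA_lower_C2 (delta : 'rV[R]_m -> R) (l : 'rV[R]_m) :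
  simplex l -> 0 < delta l -> lower_C2 (PA f delta r l).
Proof.
move=> l_simplex delta_gt0; have [C [w env_le]] := env_comb_le l_simplex.
have PA_fin : forall x, (- moreau_env (fun y => (- env_comb l y)%:E) (r + delta l) x)%E
    \is a fin_num.
  by apply: neg_env_neg_fin env_le; rewrite r_gt0 ltrDl.
rewrite PA_env_combE; split => // x; exists setT, (r + delta l).
split => //; first exact: openT.
exact: neg_env_neg_convex.
Qed.

End proximal_average.

Theorem mainTheorem1 (R : realType) (n m : nat) (hm : (0 < m)%N)
  (f : 'I_m -> 'rV[R]_n -> \bar R)
  (hproper : forall i, proper_fun (f i))
  (hlsc : forall i, lower_semicontinuous (f i))
  (hpb : forall i, prox_bounded (f i))
  (r : R) (hr : forall i, (prox_threshold (f i) < r%:E)%E)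
  (delta : 'rV[R]_m -> R)
  (hdcont : {within @simplex R m, continuous delta})
  (hde : forall i, delta (@unitv R m i) = 0)
  (hdpos : forall l, @simplex R m l -> (forall i, l <> @unitv R m i) -> 0 < delta l) :
  (forall l, @simplex R m l -> proper_fun (PA f delta r l)) /\
  (forall l, @simplex R m l -> (forall i, l 0 i != 1) ->
     lower_C2 (PA f delta r l)) /\
  (forall i, convex_efun (fun x => (f i x + (r / 2 * sqnorm x)%:E)%E) ->
     PA f delta r (@unitv R m i) = f i).
Proof.
have r_gt0 : 0 < r := prox_threshold_lt_gt0 (hr (Ordinal hm)).
have delta_ge0 l : simplex l -> 0 <= delta l.
  move=> l_simplex; have [[i ->] | l_vertex] := pselect (exists i, l = unitv R i).
    by rewrite hde.
  by apply/ltW/hdpos => // i li; apply: l_vertex; exists i.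
split.
  by move=> l l_simplex; apply: (PA_proper hproper hr l_simplex); exact: delta_ge0.
split.
  move=> l l_simplex l_ne1; apply: (PA_lower_C2 hproper hr r_gt0 l_simplex).
  apply: hdpos => // i li.
  by have := l_ne1 i; rewrite li /unitv mxE !eqxx.
move=> i f_convex; rewrite PA_unitv hde addr0; apply: funext => x.
exact: neg_moreau_env_neg_moreau_env.
Qed.
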